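(* For every integer $p\ge0$, $$\sum_{k=1}^\infty\frac{(-1)^k}{(2k-1)(2k)^p(2k+1)}=\begin{cases}\dfrac12-\dfrac{\pi}{4}+\displaystyle\sum_{j=1}^{p/2}2^{-2j}\eta(2j), & p\text{ even},\\[8pt] -\dfrac12+\dfrac{\ln 2}{2}+\displaystyle\sum_{j=1}^{(p-1)/2}2^{-(2j+1)}\eta(2j+1), & p\text{ odd},\end{cases}$$ where empty sums are $0$.
   Context: $\eta(s)=\sum_{k\ge1}(-1)^{k+1}k^{-s}$ ($\operatorname{Re}s>0$) is the Dirichlet eta function. *)

From Stdlib Require Import Reals List.
From Coquelicot Require Import Coquelicot.
Open Scope R_scope.

(* Dirichlet eta function for real s > 0:
   eta s = sum_{k>=1} (-1)^(k+1) k^(-s), the series taken as the limit of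
   its partial sums (Coquelicot's Series = Lim_seq of partial sums).
   Index shift: n = k - 1. *)
Definition eta (s : R) : R :=
  Series (fun n : nat => (-1) ^ n * Rpower (INR (n + 1)) (- s)).

Definition sum_1_to (m : nat) (f : nat -> R) : R :=
  fold_right Rplus 0 (map f (seq 1 m)).

(* Since 1/((2k-1)(2k+1)) = 1/((2k)^2 - 1), the summands satisfy
   (-1)^k/((2k-1)(2k)^(p+2)(2k+1)) = (-1)^k/((2k-1)(2k)^p(2k+1)) - (-1)^k/(2k)^(p+2),
   so raising p by 2 adds 2^(-(p+2)) eta(p+2) to the sum.  For p = 0 and p = 1,
   partial fractions reduce the series to the Leibniz series for pi/4 and the
   alternating harmonic series for ln 2; the latter is evaluated by squeezing its
   partial sums H(2N) - H(N) (harmonic numbers) between logarithms. *)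

From Stdlib Require Import Reals List Lia Lra.
From Coquelicot Require Import Coquelicot.
Open Scope R_scope.

Lemma ln_sub_bounds (x y : R) : 0 < x -> 0 < y ->
  1 - x / y <= ln y - ln x <= y / x - 1.
Proof.
  intros Hx Hy.
  assert (ln_le_sub1 : forall z, 0 < z -> ln z <= z - 1).
  { intros z Hz. rewrite <- (ln_exp (z - 1)).
    apply ln_le; [exact Hz|]. pose proof (exp_ineq1_le (z - 1)). lra. }
  pose proof (ln_le_sub1 (x / y) ltac:(apply Rdiv_lt_0_compat; lra)).
  pose proof (ln_le_sub1 (y / x) ltac:(apply Rdiv_lt_0_compat; lra)).
  rewrite ln_div in * by lra.
  lra.
Qed.

Fixpoint harmonic (n : nat) : R :=
  match n with O => 0 | S m => harmonic m + / INR (S m) end.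

Lemma harmonic_sub_ln_bounds (N j : nat) : (1 <= N)%nat ->
  harmonic (N + j) - harmonic N <= ln (INR (N + j)) - ln (INR N)
  <= harmonic (N + j) - harmonic N + / INR N - / INR (N + j).
Proof.
  intros HN. induction j as [|j IH].
  - rewrite Nat.add_0_r. lra.
  - rewrite Nat.add_succ_r. cbn [harmonic]. rewrite S_INR.
    assert (Hpos : 0 < INR (N + j)) by (apply lt_0_INR; lia).
    pose proof (ln_sub_bounds (INR (N + j)) (INR (N + j) + 1) Hpos ltac:(lra)).
    replace (1 - INR (N + j) / (INR (N + j) + 1)) with (/ (INR (N + j) + 1)) in *
      by (field; lra).
    replace ((INR (N + j) + 1) / INR (N + j) - 1) with (/ INR (N + j)) in *
      by (field; lra).
    lra.
Qed.

Lemma harmonic_double_sub_bounds (M : nat) : (1 <= M)%nat ->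
  harmonic (2 * M) - harmonic M <= ln 2
  <= harmonic (2 * M) - harmonic M + / (2 * INR M).
Proof.
  intros HM.
  pose proof (harmonic_sub_ln_bounds M M HM) as Hb.
  replace (M + M)%nat with (2 * M)%nat in Hb by lia.
  assert (HMpos : 0 < INR M) by (apply lt_0_INR; lia).
  rewrite mult_INR, ln_mult in Hb by (simpl; lra).
  replace (INR 2) with 2 in Hb by (simpl; lra).
  assert (/ INR M = 2 * / (2 * INR M)) by (field; lra).
  lra.
Qed.

(* The brackets [s (2N+1), s (2N)] of the partial sums contain both v and the
   limit given by the alternating series test, and their widths U (2N+1) tend to 0. *)
Lemma is_series_alternated (U : nat -> R) (v : R) :
  Un_decreasing U -> Un_cv U 0 ->
  (forall N, sum_f_R0 (tg_alt U) (S (2 * N)) <= v <= sum_f_R0 (tg_alt U) (2 * N)) ->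
  is_series (tg_alt U) v.
Proof.
  intros Hdec Hcv Hv.
  destruct (alternated_series U Hdec Hcv) as [l Hl].
  enough (l = v) as <- by (apply is_series_Reals; exact Hl).
  apply cond_eq. intros eps Heps.
  destruct (Hcv eps Heps) as [N HN].
  specialize (HN (S (2 * N)) ltac:(lia)). unfold R_dist in HN.
  pose proof (alternated_series_ineq U l N Hdec Hcv Hl) as Hl_bracket.
  specialize (Hv N).
  rewrite tech5 in Hl_bracket, Hv.
  unfold tg_alt at 2 in Hl_bracket. unfold tg_alt at 2 in Hv.
  rewrite pow_1_odd in Hl_bracket, Hv.
  rewrite Rminus_0_r in HN.
  apply Rabs_def2 in HN. apply Rabs_def1; lra.
Qed.

Definition inv_succ_pow (q n : nat) : R := / INR (n + 1) ^ q.

Lemma inv_succ_pow_decreasing (q : nat) : Un_decreasing (inv_succ_pow q).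
Proof.
  intro n. unfold inv_succ_pow. apply Rinv_le_contravar.
  - apply pow_lt, lt_0_INR. lia.
  - apply pow_incr. split; [apply pos_INR | apply le_INR; lia].
Qed.

Lemma inv_succ_pow_cv0 (q : nat) : (1 <= q)%nat -> Un_cv (inv_succ_pow q) 0.
Proof.
  intros Hq. apply is_lim_seq_Reals.
  apply (is_lim_seq_le_le (fun _ => 0) _ (fun n => / INR (n + 1))).
  - intro n. unfold inv_succ_pow.
    assert (Hn1 : 1 <= INR (n + 1)) by (rewrite plus_INR; simpl; pose proof (pos_INR n); lra).
    split.
    + left. apply Rinv_0_lt_compat, pow_lt. lra.
    + apply Rinv_le_contravar; [lra|].
      rewrite <- (pow_1 (INR (n + 1))) at 1. apply Rle_pow; assumption.
  - apply is_lim_seq_const.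
  - replace (Finite 0) with (Rbar_inv p_infty) by reflexivity.
    apply is_lim_seq_inv; [|discriminate].
    eapply is_lim_seq_ext; [intro n; rewrite Nat.add_1_r; reflexivity |].
    apply -> (is_lim_seq_incr_1 INR). apply is_lim_seq_INR.
Qed.

Lemma eta_is_series (q : nat) : (1 <= q)%nat ->
  is_series (fun n => (-1) ^ n * Rpower (INR (n + 1)) (- INR q)) (eta (INR q)).
Proof.
  intros Hq. unfold eta. apply Series_correct.
  destruct (alternated_series _ (inv_succ_pow_decreasing q) (inv_succ_pow_cv0 q Hq))
    as [l Hl].
  exists l. apply is_series_Reals.
  eapply Un_cv_ext; [|exact Hl]. intro N. apply sum_eq. intros n _.
  unfold tg_alt, inv_succ_pow.
  rewrite Rpower_Ropp, Rpower_pow by (apply lt_0_INR; lia).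
  reflexivity.
Qed.

Lemma alt_harmonic_partial_sum (N : nat) :
  sum_f_R0 (tg_alt (inv_succ_pow 1)) (S (2 * N))
  = harmonic (2 * (N + 1)) - harmonic (N + 1).
Proof.
  induction N as [|N IH].
  - unfold tg_alt, inv_succ_pow. cbn. field.
  - replace (S (2 * S N)) with (S (S (S (2 * N)))) by lia.
    replace (2 * (S N + 1))%nat with (S (S (2 * (N + 1)))) by lia.
    replace (S N + 1)%nat with (S (N + 1)) by lia.
    rewrite 2!tech5, IH. cbn [harmonic].
    unfold tg_alt, inv_succ_pow.
    replace (S (S (2 * N))) with (2 * (N + 1))%nat by lia.
    rewrite pow_1_even, pow_1_odd, !pow_1.
    repeat rewrite ?S_INR, ?plus_INR, ?mult_INR, ?INR_0.
    pose proof (pos_INR N).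
    field. lra.
Qed.

Lemma alt_harmonic_is_series_ln2 : is_series (tg_alt (inv_succ_pow 1)) (ln 2).
Proof.
  apply is_series_alternated.
  - apply inv_succ_pow_decreasing.
  - apply inv_succ_pow_cv0. lia.
  - intro N.
    assert (Hlast : tg_alt (inv_succ_pow 1) (S (2 * N)) = - / (2 * INR (N + 1))).
    { unfold tg_alt, inv_succ_pow. rewrite pow_1_odd, pow_1.
      replace (S (2 * N) + 1)%nat with (2 * (N + 1))%nat by lia.
      rewrite mult_INR. replace (INR 2) with 2 by (simpl; lra). ring. }
    pose proof (tech5 (tg_alt (inv_succ_pow 1)) (2 * N)) as Hsplit.
    rewrite Hlast, alt_harmonic_partial_sum in Hsplit.
    rewrite alt_harmonic_partial_sum.
    pose proof (harmonic_double_sub_bounds (N + 1) ltac:(lia)).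
    lra.
Qed.

Lemma leibniz_is_series : is_series (tg_alt PI_tg) (PI / 4).
Proof. exact (is_series_alternated _ _ PI_tg_decreasing PI_tg_cv PI_ineq). Qed.

Lemma leibniz_succ_is_series : is_series (fun n => tg_alt PI_tg (S n)) (PI / 4 - 1).
Proof.
  apply (is_series_incr_1 (tg_alt PI_tg)).
  match goal with |- is_series _ ?v => replace v with (PI / 4) end.
  - exact leibniz_is_series.
  - unfold plus, tg_alt, PI_tg. simpl. field.
Qed.

Lemma is_series_lin_comb (a b : nat -> R) (la lb c d : R) :
  is_series a la -> is_series b lb ->
  is_series (fun n => c * a n + d * b n) (c * la + d * lb).
Proof.
  intros Ha Hb.
  exact (is_series_plus _ _ _ _ (is_series_scal c a la Ha) (is_series_scal d b lb Hb)).
Qed.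

Definition summand (p n : nat) : R :=
  let k := INR (n + 1) in
  (-1) ^ (n + 1) / ((2 * k - 1) * (2 * k) ^ p * (2 * k + 1)).

Lemma summand0_partial_fractions (n : nat) :
  summand 0 n = - / 2 * tg_alt PI_tg n + - / 2 * tg_alt PI_tg (S n).
Proof.
  unfold summand, tg_alt, PI_tg. rewrite pow_add, pow_1, <- tech_pow_Rmult.
  repeat rewrite ?S_INR, ?plus_INR, ?mult_INR, ?INR_0.
  pose proof (pos_INR n).
  field. lra.
Qed.

Lemma summand1_partial_fractions (n : nat) :
  summand 1 n = - / 2 * (tg_alt PI_tg n - tg_alt PI_tg (S n))
                + / 2 * tg_alt (inv_succ_pow 1) n.
Proof.
  unfold summand, tg_alt, PI_tg, inv_succ_pow. rewrite pow_add, !pow_1, <- tech_pow_Rmult.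
  repeat rewrite ?S_INR, ?plus_INR, ?mult_INR, ?INR_0.
  pose proof (pos_INR n).
  field. lra.
Qed.

Lemma summand0_is_series : is_series (summand 0) (1 / 2 - PI / 4).
Proof.
  eapply is_series_ext; [intro n; symmetry; apply summand0_partial_fractions|].
  replace (1 / 2 - PI / 4) with (- / 2 * (PI / 4) + - / 2 * (PI / 4 - 1)) by field.
  exact (is_series_lin_comb _ _ _ _ _ _ leibniz_is_series leibniz_succ_is_series).
Qed.

Lemma summand1_is_series : is_series (summand 1) (- (1 / 2) + ln 2 / 2).
Proof.
  eapply is_series_ext; [intro n; symmetry; apply summand1_partial_fractions|].
  replace (- (1 / 2) + ln 2 / 2) with (- / 2 * (1 * (PI / 4) + -1 * (PI / 4 - 1)) + / 2 * ln 2)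
    by field.
  apply is_series_lin_comb; [|exact alt_harmonic_is_series_ln2].
  eapply is_series_ext;
    [|exact (is_series_lin_comb _ _ _ _ 1 (-1) leibniz_is_series leibniz_succ_is_series)].
  intro n. cbv beta. lra.
Qed.

Lemma summand_add2 (p n : nat) :
  summand (p + 2) n
  = summand p n + / 2 ^ (p + 2) * ((-1) ^ n * Rpower (INR (n + 1)) (- INR (p + 2))).
Proof.
  unfold summand. set (k := INR (n + 1)).
  assert (Hk : 1 <= k) by (unfold k; rewrite plus_INR; simpl; pose proof (pos_INR n); lra).
  rewrite Rpower_Ropp, Rpower_pow by lra.
  replace (/ 2 ^ (p + 2) * ((-1) ^ n * / k ^ (p + 2))) with ((-1) ^ n / (2 * k) ^ (p + 2))
    by (rewrite Rpow_mult_distr; field; split; apply pow_nonzero; lra).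
  assert (H2kp : (2 * k) ^ p <> 0) by (apply pow_nonzero; lra).
  rewrite !pow_add. simpl pow.
  field. repeat split; lra.
Qed.

Lemma summand_add2_is_series (p : nat) (L : R) : is_series (summand p) L ->
  is_series (summand (p + 2)) (L + / 2 ^ (p + 2) * eta (INR (p + 2))).
Proof.
  intros Hp.
  eapply is_series_ext; [intro n; symmetry; apply summand_add2|].
  rewrite <- (Rmult_1_l L) at 1.
  eapply is_series_ext;
    [|exact (is_series_lin_comb _ _ _ _ 1 _ Hp (eta_is_series (p + 2) ltac:(lia)))].
  intro n. cbv beta. lra.
Qed.

Lemma fold_right_Rplus_acc (l : list R) (a : R) :
  fold_right Rplus a l = fold_right Rplus 0 l + a.
Proof. induction l as [|x l IH]; simpl; [|rewrite IH]; lra. Qed.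

Lemma sum_1_to_S (m : nat) (f : nat -> R) :
  sum_1_to (S m) f = sum_1_to m f + f (S m).
Proof.
  unfold sum_1_to. rewrite seq_S, map_app, fold_right_app. simpl.
  rewrite fold_right_Rplus_acc. lra.
Qed.

Lemma sum_1_to_ext (m : nat) (f g : nat -> R) :
  (forall j, f j = g j) -> sum_1_to m f = sum_1_to m g.
Proof. intros Hfg. unfold sum_1_to. now rewrite (map_ext f g). Qed.

Lemma summand_add_mul2_is_series (p m : nat) (L : R) : is_series (summand p) L ->
  is_series (summand (p + 2 * m))
    (L + sum_1_to m (fun j => / 2 ^ (p + 2 * j) * eta (INR (p + 2 * j)))).
Proof.
  intros Hp. induction m as [|m IH].
  - rewrite Nat.add_0_r. unfold sum_1_to. simpl. rewrite Rplus_0_r. exact Hp.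
  - replace (p + 2 * S m)%nat with (p + 2 * m + 2)%nat by lia.
    rewrite sum_1_to_S, <- Rplus_assoc.
    replace (p + 2 * S m)%nat with (p + 2 * m + 2)%nat by lia.
    exact (summand_add2_is_series _ _ IH).
Qed.

Theorem corollary3 (p : nat) :
  is_series
    (fun n : nat =>
       let k := INR (n + 1) in
       (-1) ^ (n + 1) / ((2 * k - 1) * (2 * k) ^ p * (2 * k + 1)))
    (if Nat.even p then
       1 / 2 - PI / 4
       + sum_1_to (p / 2) (fun j => / 2 ^ (2 * j) * eta (INR (2 * j)))
     else
       - (1 / 2) + ln 2 / 2
       + sum_1_to ((p - 1) / 2) (fun j => / 2 ^ (2 * j + 1) * eta (INR (2 * j + 1)))).
Proof.
  destruct (Nat.Even_or_Odd p) as [[m ->] | [m ->]].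
  - replace (Nat.even (2 * m)) with true by (rewrite Nat.even_mul; reflexivity).
    replace (2 * m / 2)%nat with m by (rewrite Nat.mul_comm, Nat.div_mul; lia).
    exact (summand_add_mul2_is_series 0 m _ summand0_is_series).
  - replace (Nat.even (2 * m + 1)) with false
      by (rewrite Nat.even_add, Nat.even_mul; reflexivity).
    replace ((2 * m + 1 - 1) / 2)%nat with m
      by (rewrite Nat.add_sub, Nat.mul_comm, Nat.div_mul; lia).
    rewrite (Nat.add_comm (2 * m) 1),
      (sum_1_to_ext m _ (fun j => / 2 ^ (1 + 2 * j) * eta (INR (1 + 2 * j))))
      by (intro j; rewrite (Nat.add_comm (2 * j) 1); reflexivity).
    exact (summand_add_mul2_is_series 1 m _ summand1_is_series).
Qed.
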